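(* In the two-asset bid-ask model described in the context, let $\delta^b_t=S^b_t/S^b_{t-1}$ and $\delta^a_t=S^a_t/S^a_{t-1}$. If for all $t=1,\dots,T$ and all $c>0$, $$\mathbb{P}(\delta^b_t\le c\,|\,\mathcal{F}_{t-1})\,\mathbb{P}(\delta^a_t\ge c\,|\,\mathcal{F}_{t-1})>0\quad\text{a.s.},$$ then (NA2) holds.
   Context: $(\Omega,\mathcal{F},(\mathcal{F}_t)_{t=0,\dots,T},\mathbb{P})$ filtered complete probability space, $\mathcal{F}_0$ trivial. $d=2$. For each $t$, $S^b_t,S^a_t$ are $\mathcal{F}_t$-measurable random variables with $0<S^b_t\le S^a_t$ a.s., and the solvency cone is $\mathbf{K}_t=\{x\in\mathbb{R}^2:\ x_1+y\,x_2\ge0\ \text{for all }y\in[S^b_t,S^a_t]\}$. $L^0(\Gamma,\mathcal{F}_t)$: $\mathcal{F}_t$-measurable random vectors a.s. in $\Gamma$. $\mathsf{A}_{t,T}=\sum_{u=t}^TL^0(-\mathbf{K}_u,\mathcal{F}_u)$. (NA2): for every $t$ and $\eta_t\in L^0(\mathbb{R}^2,\mathcal{F}_t)$, if $(\eta_t+\mathsf{A}_{t,T})\cap L^0(\mathbf{K}_T,\mathcal{F}_T)\neq\emptyset$ then $\eta_t\in L^0(\mathbf{K}_t,\mathcal{F}_t)$. *)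

From HB Require Import structures.
From mathcomp Require Import all_boot all_order all_algebra.
From mathcomp Require Import all_classical all_reals all_analysis.
Set Implicit Arguments. Unset Strict Implicit. Unset Printing Implicit Defensive.
Import Order.TTheory GRing.Theory Num.Theory.
Local Open Scope classical_set_scope.
Local Open Scope ring_scope.

Section Defs.
Context {d : measure_display} {Omega : measurableType d} {R : realType}.

Definition Fmeas (G : set (set Omega)) (f : Omega -> R) : Prop :=
  forall B : set R, measurable B -> G (f @^-1` B).

Definition Fmeas2 (G : set (set Omega)) (f : Omega -> R * R) : Prop :=
  Fmeas G (fun w => (f w).1) /\ Fmeas G (fun w => (f w).2).

Definition filtration (F : nat -> set (set Omega)) : Prop :=
  (forall t, sigma_algebra setT (F t)) /\
  (forall t, F t `<=` measurable) /\
  (forall s t, (s <= t)%N -> F s `<=` F t).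

Definition solv_cone (sb sa : R) : set (R * R) :=
  [set x | forall y : R, sb <= y <= sa -> 0 <= x.1 + y * x.2].

Definition neg_solv_cone (sb sa : R) : set (R * R) :=
  [set x | solv_cone sb sa (- x.1, - x.2)].

(* xi is (a representative of) an element of L^0(Gamma, G):
   G-measurable and a.s. in the random set Gamma *)
Definition L0 (P : probability Omega R) (G : set (set Omega))
  (Gamma : Omega -> set (R * R)) (xi : Omega -> R * R) : Prop :=
  Fmeas2 G xi /\ {ae P, forall w, Gamma w (xi w)}.

Definition cond_prob_version (P : probability Omega R) (G : set (set Omega))
  (A : set Omega) (g : Omega -> R) : Prop :=
  Fmeas G g /\ P.-integrable setT (fun w => (g w)%:E) /\
  forall B, G B -> (\int[P]_(w in B) (g w)%:E = P (A `&` B))%E.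

(* (NA2) for the bid-ask model; for eta_t + A_{t,T} meeting L^0(K_T,F_T),
   an element of A_{t,T} is written as sum_{u=t}^T xi_u, xi_u in L^0(-K_u,F_u) *)
Definition NA2 (P : probability Omega R) (F : nat -> set (set Omega))
  (Sb Sa : nat -> Omega -> R) (T : nat) : Prop :=
  forall t : nat, (t <= T)%N ->
  forall eta : Omega -> R * R, Fmeas2 (F t) eta ->
  forall xi : nat -> Omega -> R * R,
    (forall u, (t <= u <= T)%N ->
       L0 P (F u) (fun w => neg_solv_cone (Sb u w) (Sa u w)) (xi u)) ->
    L0 P (F T) (fun w => solv_cone (Sb T w) (Sa T w))
       (fun w => ((eta w).1 + \sum_(t <= u < T.+1) (xi u w).1,
                  (eta w).2 + \sum_(t <= u < T.+1) (xi u w).2)) ->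
    L0 P (F t) (fun w => solv_cone (Sb t w) (Sa t w)) eta.

End Defs.

From HB Require Import structures.
From mathcomp Require Import all_boot all_order all_algebra.
From mathcomp Require Import all_classical all_reals all_analysis.
From mathcomp Require Import measurable_realfun lra zify.
Import Order.TTheory GRing.Theory Num.Theory.
Local Open Scope classical_set_scope.
Local Open Scope ring_scope.
Set Implicit Arguments. Unset Strict Implicit.

(* Let Z_k = eta + xi_t + ... + xi_(k-1), so that Z_(T+1) is solvent at T, and argue
   backwards in k.  Since xi_k is in -K_k, solvency of Z_(k+1) at time k passes to Z_k.
   Since Z_(k+1) is F_k-measurable, solvency at time k+1 passes to time k: the F_k-set
   where Z_(k+1) holds stock and violates the bid constraint for S^b_k is a.s. disjoint
   from {S^b_(k+1) <= S^b_k}, an event of a.s. positive conditional probability given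
   F_k, hence it is null; symmetrically for short positions and the ask. *)

Section SubSigmaMeasurability.
Context {d : measure_display} {Omega : measurableType d} {R : realType}.
Variable G : set (set Omega).
Hypothesis sigmaG : sigma_algebra setT G.

Lemma FmeasP (f : Omega -> R) :
  Fmeas G f <-> measurable_fun (setT : set (g_sigma_algebraType G)) f.
Proof.
have GE := measurable_g_measurableTypeE sigmaG.
split=> [mf _ B mB | mf B mB]; first by rewrite setTI GE; exact: mf.
by have := mf measurableT B mB; rewrite setTI GE.
Qed.

Lemma Fmeas_cst (c : R) : Fmeas G (fun=> c).
Proof. by apply/FmeasP; exact: measurable_cst. Qed.

Lemma FmeasD (f g : Omega -> R) :
  Fmeas G f -> Fmeas G g -> Fmeas G (fun w => f w + g w).
Proof. by move=> /FmeasP mf /FmeasP mg; apply/FmeasP; exact: measurable_funD. Qed.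

Lemma FmeasM (f g : Omega -> R) :
  Fmeas G f -> Fmeas G g -> Fmeas G (fun w => f w * g w).
Proof. by move=> /FmeasP mf /FmeasP mg; apply/FmeasP; exact: measurable_funM. Qed.

Lemma FmeasN (f : Omega -> R) : Fmeas G f -> Fmeas G (fun w => - f w).
Proof. by move=> /FmeasP mf; apply/FmeasP; exact: measurable_funN. Qed.

Lemma Fmeas_sum_nat (m n : nat) (f : nat -> Omega -> R) :
  (forall u, (m <= u < n)%N -> Fmeas G (f u)) ->
  Fmeas G (fun w => \sum_(m <= u < n) f u w).
Proof.
move=> mf; have [nm|mn] := leqP n m.
  by under [X in Fmeas _ X]funext => w do rewrite big_geq//; exact: Fmeas_cst.
rewrite -[m]add0n; under [X in Fmeas _ X]funext => w do rewrite big_addn big_mkord.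
apply/FmeasP; apply: measurable_sum => i; apply/FmeasP/mf.
by rewrite leq_addl /= addnC -ltn_subRL.
Qed.

Lemma Fmeas_lt0 (h : Omega -> R) : Fmeas G h -> G [set w | h w < 0].
Proof.
move=> mh; have := mh _ (measurable_itv `]-oo, 0[).
by congr G; apply/seteqP; split => w; rewrite /preimage /= in_itv.
Qed.

Lemma Fmeas_ge0 (h : Omega -> R) : Fmeas G h -> G [set w | 0 <= h w].
Proof.
move=> mh; have := mh _ (measurable_itv `[0, +oo[).
by congr G; apply/seteqP; split => w; rewrite /preimage /= in_itv /= andbT.
Qed.

Lemma sigma_algebraI (A B : set Omega) : G A -> G B -> G (A `&` B).
Proof.
have := @measurableI _ (g_sigma_algebraType G) A B.
by rewrite (measurable_g_measurableTypeE sigmaG).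
Qed.

End SubSigmaMeasurability.

Section ConditionalProbability.
Context {d : measure_display} {Omega : measurableType d} {R : realType}.
Variable P : probability Omega R.
Hypothesis completeP : measure_is_complete P.

Lemma ae_eq0_integral_ge0 (D : set Omega) (g : Omega -> R) :
  measurable D -> measurable_fun D g -> (forall w, D w -> 0 <= g w) ->
  (\int[P]_(w in D) (g w)%:E = 0)%E -> {ae P, forall w, D w -> g w = 0}.
Proof.
move=> mD mg g_ge0 int_g0.
have : ae_eq P D (EFin \o g) (cst 0%E).
  apply/(ae_eq_integral_abs _ mD); first exact/measurable_EFinP.
  rewrite -int_g0; apply: eq_integral => w /[!inE] Dw.
  by rewrite /= ger0_norm ?g_ge0.
by apply: filterS => w + Dw => /(_ Dw) [].
Qed.

Variable G : set (set Omega).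
Hypothesis sigmaG : sigma_algebra setT G.
Hypothesis measurableG : G `<=` measurable.

Lemma cond_prob_version_eq0 (A C : set Omega) (g : Omega -> R) :
  cond_prob_version P G A g -> G C -> P.-negligible (A `&` C) ->
  {ae P, forall w, C w -> g w = 0}.
Proof.
move=> [Fg [intg int_g]] GC nAC.
have mg : measurable_fun setT g.
  by move=> _ B mB; rewrite setTI; apply: measurableG; exact: Fg.
have int_g0 B : G B -> B `<=` C -> (\int[P]_(w in B) (g w)%:E = 0)%E.
  move=> GB BC; rewrite int_g //.
  have nAB : P.-negligible (A `&` B) by apply: negligibleS nAC => w [Aw /BC].
  exact/(negligibleP _ (completeP nAB)).
set Cp := C `&` [set w | 0 <= g w]; set Cn := C `&` [set w | g w < 0].
have GCp : G Cp by apply: sigma_algebraI => //; exact: Fmeas_ge0.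
have GCn : G Cn by apply: sigma_algebraI => //; exact: Fmeas_lt0.
have gp0 : {ae P, forall w, Cp w -> g w = 0}.
  apply: ae_eq0_integral_ge0; [exact: measurableG | exact: measurable_funS mg |
    by move=> w [] | by apply: int_g0 => // w []].
have gn0 : {ae P, forall w, Cn w -> - g w = 0}.
  apply: ae_eq0_integral_ge0.
  - exact: measurableG.
  - by apply: measurable_funN; exact: measurable_funS mg.
  - by move=> w [_ /ltW]; rewrite oppr_ge0.
  rewrite (eq_integral (fun w => (-1)%:E * (g w)%:E)%E); last first.
    by move=> w _; rewrite mulN1e EFinN.
  rewrite integralZl ?int_g0 ?mule0 //; first by move=> w [].
  - exact: measurableG.
  - by apply: integrableS intg => //; exact: measurableG.
move: gp0 gn0; apply: filterS2 => w gp0 gn0 Cw.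
have [g_ge0|g_lt0] := leP 0 (g w); first exact: gp0.
by apply/eqP; rewrite -oppr_eq0 gn0.
Qed.

Lemma cond_prob_neq0_negligible (A C : set Omega) (g : Omega -> R) :
  cond_prob_version P G A g -> {ae P, forall w, g w != 0} -> G C ->
  {ae P, forall w, A w -> ~ C w} -> {ae P, forall w, ~ C w}.
Proof.
move=> cpA g_neq0 GC A_notC.
have nAC : P.-negligible (A `&` C).
  by apply: negligibleS A_notC => w [Aw Cw] /(_ Aw).
move: (cond_prob_version_eq0 cpA GC nAC) g_neq0; apply: filterS2.
by move=> w gC0 /eqP gw0 Cw; exact/gw0/gC0.
Qed.

Lemma cond_prob_neq0_ae_ge0 (A : set Omega) (g s h : Omega -> R) :
  cond_prob_version P G A g -> {ae P, forall w, g w != 0} ->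
  Fmeas G s -> Fmeas G h ->
  {ae P, forall w, A w -> 0 <= s w -> 0 <= h w} ->
  {ae P, forall w, 0 <= s w -> 0 <= h w}.
Proof.
move=> cpA g_neq0 Fs Fh A_impl.
have GC : G ([set w | 0 <= s w] `&` [set w | h w < 0]).
  by apply: sigma_algebraI => //; [exact: Fmeas_ge0 | exact: Fmeas_lt0].
have /(cond_prob_neq0_negligible cpA g_neq0 GC) : {ae P, forall w, A w ->
    ~ ([set w | 0 <= s w] `&` [set w | h w < 0]) w}.
  by apply: filterS A_impl => w impl Aw [/(impl Aw)]; rewrite leNgt => /negP.
apply: filterS => w notC s_ge0; rewrite leNgt; apply/negP => h_lt0; exact: notC.
Qed.

End ConditionalProbability.

Section SolvencyCone.
Context {R : realType}.

Lemma solv_cone_endpoints (b a : R) (x : R * R) :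
  (0 <= x.2 -> 0 <= x.1 + b * x.2) -> (x.2 <= 0 -> 0 <= x.1 + a * x.2) ->
  solv_cone b a x.
Proof.
move=> xb xa y /andP[b_y y_a]; have [x2_ge0|x2_lt0] := leP 0 x.2.
- by have := xb x2_ge0; nra.
- by have := xa (ltW x2_lt0); nra.
Qed.

Lemma solv_coneB (b a : R) (z x : R * R) :
  solv_cone b a z -> neg_solv_cone b a x -> solv_cone b a (z.1 - x.1, z.2 - x.2).
Proof. by move=> Kz Kx y y_ba; have := Kz y y_ba; have := Kx y y_ba => /=; nra. Qed.

Lemma solv_cone_bid_le (b a b' : R) (x : R * R) :
  b <= a -> b <= b' -> solv_cone b a x -> 0 <= x.2 -> 0 <= x.1 + b' * x.2.
Proof. by move=> ba bb' /(_ b); rewrite lexx ba => /(_ isT); nra. Qed.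

Lemma solv_cone_ask_ge (b a a' : R) (x : R * R) :
  b <= a -> a' <= a -> solv_cone b a x -> x.2 <= 0 -> 0 <= x.1 + a' * x.2.
Proof. by move=> ba a'a /(_ a); rewrite lexx ba => /(_ isT); nra. Qed.

End SolvencyCone.

Section OnePeriod.
Context {d : measure_display} {Omega : measurableType d} {R : realType}.
Variable P : probability Omega R.
Hypothesis completeP : measure_is_complete P.
Variable G : set (set Omega).
Hypothesis sigmaG : sigma_algebra setT G.
Hypothesis measurableG : G `<=` measurable.

Lemma ae_solv_cone_prev (b0 a0 b1 a1 : Omega -> R) (X : Omega -> R * R)
    (g1 g2 : Omega -> R) :
  Fmeas G b0 -> Fmeas G a0 -> Fmeas2 G X ->
  {ae P, forall w, 0 < b0 w} -> {ae P, forall w, 0 < a0 w} ->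
  {ae P, forall w, b1 w <= a1 w} ->
  cond_prob_version P G [set w | b1 w / b0 w <= 1] g1 ->
  cond_prob_version P G [set w | 1 <= a1 w / a0 w] g2 ->
  {ae P, forall w, 0 < g1 w * g2 w} ->
  {ae P, forall w, solv_cone (b1 w) (a1 w) (X w)} ->
  {ae P, forall w, solv_cone (b0 w) (a0 w) (X w)}.
Proof.
move=> Fb0 Fa0 [FX1 FX2] b0_gt0 a0_gt0 ba1 cp1 cp2 g_gt0 KX.
have g1_neq0 : {ae P, forall w, g1 w != 0}.
  by apply: filterS g_gt0 => w; apply: contraTneq => ->; rewrite mul0r ltxx.
have g2_neq0 : {ae P, forall w, g2 w != 0}.
  by apply: filterS g_gt0 => w; apply: contraTneq => ->; rewrite mulr0 ltxx.
have bid : {ae P, forall w, 0 <= (X w).2 -> 0 <= (X w).1 + b0 w * (X w).2}.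
  apply: (cond_prob_neq0_ae_ge0 completeP sigmaG measurableG cp1 g1_neq0 FX2).
    by apply: FmeasD => //; exact: FmeasM.
  move: b0_gt0 ba1 KX; apply: filterS3 => w b0w ba1w KXw /=.
  by rewrite ler_pdivrMr // mul1r => b10; exact: solv_cone_bid_le KXw.
have ask : {ae P, forall w, 0 <= - (X w).2 -> 0 <= (X w).1 + a0 w * (X w).2}.
  apply: (cond_prob_neq0_ae_ge0 completeP sigmaG measurableG cp2 g2_neq0).
  - exact: FmeasN.
  - by apply: FmeasD => //; exact: FmeasM.
  move: a0_gt0 ba1 KX; apply: filterS3 => w a0w ba1w KXw /=.
  rewrite ler_pdivlMr // mul1r oppr_ge0 => a01; exact: solv_cone_ask_ge KXw.
by move: bid ask; apply: filterS2 => w bid ask; apply: solv_cone_endpoints => // ?;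
  apply: ask; rewrite oppr_ge0.
Qed.

End OnePeriod.

Lemma nat_ind_down (Q : nat -> Prop) (t T : nat) :
  (t <= T)%N -> Q T -> (forall k, (t <= k < T)%N -> Q k.+1 -> Q k) -> Q t.
Proof.
move=> tT QT QS; have [n Tn] : exists n, T = (t + n)%N by exists (T - t)%N; lia.
subst T; elim: n t tT QT QS => [|n IH] t _ QT QS; first by rewrite addn0 in QT.
apply: (QS); first lia.
by apply: IH => [||k /andP[tk kT]]; [lia | rewrite addSnnS | apply: QS; lia].
Qed.

Section CumulativePosition.
Context {d : measure_display} {Omega : measurableType d} {R : realType}.
Variables (eta : Omega -> R * R) (xi : nat -> Omega -> R * R) (t : nat).

Definition cum_position (k : nat) (w : Omega) : R * R :=
  ((eta w).1 + \sum_(t <= u < k) (xi u w).1, (eta w).2 + \sum_(t <= u < k) (xi u w).2).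

Lemma cum_position_start : cum_position t = eta.
Proof.
by apply: funext => w; rewrite /cum_position !big_geq // !addr0; case: (eta w).
Qed.

Lemma cum_positionS (k : nat) (w : Omega) : (t <= k)%N ->
  cum_position k w =
  ((cum_position k.+1 w).1 - (xi k w).1, (cum_position k.+1 w).2 - (xi k w).2).
Proof. by move=> tk; rewrite /cum_position /= !big_nat_recr //= !addrA !addrK. Qed.

Lemma Fmeas2_cum_position (F : nat -> set (set Omega)) (k : nat) :
  filtration F -> (t <= k)%N -> Fmeas2 (F t) eta ->
  (forall u, (t <= u <= k)%N -> Fmeas2 (F u) (xi u)) ->
  Fmeas2 (F k) (cum_position k.+1).
Proof.
move=> [sigmaF [_ monoF]] tk [Feta1 Feta2] Fxi.
have Fk f : Fmeas (F t) f -> Fmeas (F k) f by move=> Ff B /Ff; exact: monoF.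
have Fxik u : (t <= u < k.+1)%N -> Fmeas2 (F k) (xi u).
  move=> /andP[tu uk]; have [Fxi1 Fxi2] := Fxi u (ltac:(lia)).
  by split=> B mB; apply: (monoF u k) => //; [exact: Fxi1 | exact: Fxi2].
by split; apply: FmeasD => //; [exact: Fk | | exact: Fk |];
  apply: Fmeas_sum_nat => // u /Fxik [].
Qed.

End CumulativePosition.

Unset Implicit Arguments.

Theorem corollary9p4 (d : measure_display) (Omega : measurableType d)
  (R : realType) (P : probability Omega R)
  (F : nat -> set (set Omega)) (T : nat) (Sb Sa : nat -> Omega -> R) :
  measure_is_complete P ->
  filtration F ->
  (forall A, F 0%N A -> P A = 0%E \/ P A = 1%E) ->
  (forall t, (t <= T)%N -> Fmeas (F t) (Sb t) /\ Fmeas (F t) (Sa t)) ->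
  (forall t, (t <= T)%N -> {ae P, forall w, 0 < Sb t w <= Sa t w}) ->
  (forall t, (1 <= t <= T)%N -> forall c : R, 0 < c ->
     exists g1 g2 : Omega -> R,
       cond_prob_version P (F t.-1) [set w | Sb t w / Sb t.-1 w <= c] g1 /\
       cond_prob_version P (F t.-1) [set w | c <= Sa t w / Sa t.-1 w] g2 /\
       {ae P, forall w, 0 < g1 w * g2 w}) ->
  NA2 P F Sb Sa T.
Proof.
move=> completeP filtF _ FS S_pos cond t tT eta Feta xi Kxi [_ KT]; split=> //.
have [sigmaF [measF _]] := filtF.
pose Z := cum_position eta xi t.
have unwind k : (t <= k <= T)%N ->
    {ae P, forall w, solv_cone (Sb k w) (Sa k w) (Z k.+1 w)} ->
    {ae P, forall w, solv_cone (Sb k w) (Sa k w) (Z k w)}.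
  move=> tkT; have [_ Kxik] := Kxi k tkT; apply: filterS2 Kxik => w Kxikw KZ.
  by rewrite /Z cum_positionS; [exact: solv_coneB | case/andP: tkT].
rewrite -(cum_position_start eta xi t) -/Z.
pose solvent k := {ae P, forall w, solv_cone (Sb k w) (Sa k w) (Z k w)}.
apply: (@nat_ind_down solvent _ _ tT) => [|k /andP[tk kT] KZk1].
  by apply: unwind; [rewrite tT leqnn | exact: KT].
apply: unwind; first lia.
have [g1 [g2 [cp1 [cp2 g_gt0]]]] := cond k.+1 (ltac:(lia)) 1 ltr01.
have [FSbk FSak] := FS k (ltac:(lia)).
have [S0 S1] := (S_pos k (ltac:(lia)), S_pos k.+1 kT).
apply: (ae_solv_cone_prev completeP (sigmaF k) (measF k) FSbk FSak _ _ _ _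
  cp1 cp2 g_gt0 KZk1).
- by apply: Fmeas2_cum_position => // u /andP[tu uk]; case: (Kxi u (ltac:(lia))).
- by apply: filterS S0 => w /andP[].
- by apply: filterS S0 => w /andP[/lt_le_trans]; apply.
- by apply: filterS S1 => w /andP[].
Qed.
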